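(* Let $\tilde f$ satisfy (H1), (H2) and (H3). For $i\in\{0,1\}$, $\rho_{\tilde A_i}(\tilde f)$ is contained in the convex hull of $\rho_{\Theta(\tilde A_i)}(\tilde f)$. In particular $\rho_{\tilde A_0}(\tilde f)\subset(0,+\infty)$ and $\rho_{\tilde A_1}(\tilde f)\subset(-\infty,0)$.
   Context: Let $\tilde f$ be a homeomorphism of $\mathbb{R}^2$ isotopic to the identity and commuting with $T(x,y)=(x+1,y)$; $p_1$ is the first coordinate projection. For a horizontal line $\Gamma$, $U^+_\Gamma$ and $U^-_\Gamma$ denote the open half-planes above and below $\Gamma$. Hypotheses: (H1) $\Gamma_0,\Gamma_1,\Gamma_2$ are horizontal lines with $\Gamma_0\subset U^+_{\Gamma_1}$, $\Gamma_1\subset U^+_{\Gamma_2}$, and $\tilde f(\Gamma_j)\subset U^-_{\Gamma_j}$ for $j=0,1,2$; (H2) $\tilde f^n(\Gamma_0)\cap\Gamma_2\ne\emptyset$ for every integer $n\ge1$; (H3) for $i\in\{0,1\}$, letting $\tilde A_i$ be the closed band between $\Gamma_i$ and $\Gamma_{i+1}$, the sets $\Theta(\tilde A_0),\Theta(\tilde A_1)$ are non-empty and $\rho_{\Theta(\tilde A_0)}(\tilde f)\subset(0,+\infty)$, $\rho_{\Theta(\tilde A_1)}(\tilde f)\subset(-\infty,0)$. Here $\Theta(\tilde E)=\{x\in\tilde E:\tilde f^n(x)\in\tilde E\ \forall n\in\mathbb{Z}\}$, and for a closed $T$-invariant set $\tilde E$ contained in a horizontal band, $\rho_{\tilde E}(\tilde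 f)=\bigcap_{m\ge1}\mathrm{Cl}\big(\bigcup_{n\ge m}\{\frac1n(p_1(\tilde f^n(\tilde z))-p_1(\tilde z)): \tilde z\in\tilde E,\ \tilde f^n(\tilde z)\in\tilde E\}\big)$, closure in $\overline{\mathbb{R}}=\mathbb{R}\cup\{\pm\infty\}$. *)

From Stdlib Require Import Reals Lra ZArith.
Open Scope R_scope.

Definition R2 : Type := (R * R)%type.

(* max-metric on R^2 (induces the usual topology) *)
Definition d2 (z w : R2) : R := Rmax (Rabs (fst z - fst w)) (Rabs (snd z - snd w)).

Definition continuous2 (f : R2 -> R2) : Prop :=
  forall z eps, 0 < eps -> exists delta, 0 < delta /\
    forall w, d2 w z < delta -> d2 (f w) (f z) < eps.

Definition is_homeo (f g : R2 -> R2) : Prop :=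
  continuous2 f /\ continuous2 g /\
  (forall z, f (g z) = z) /\ (forall z, g (f z) = z).

Definition isotopic_to_id (f : R2 -> R2) : Prop :=
  exists H : R -> R2 -> R2,
    (forall t z eps, 0 <= t <= 1 -> 0 < eps -> exists delta, 0 < delta /\
       forall s w, 0 <= s <= 1 -> Rabs (s - t) < delta -> d2 w z < delta ->
         d2 (H s w) (H t z) < eps) /\
    (forall t, 0 <= t <= 1 -> exists g, is_homeo (H t) g) /\
    (forall z, H 0 z = z) /\ (forall z, H 1 z = f z).

Definition Tr (z : R2) : R2 := (fst z + 1, snd z).

Definition iterz (f g : R2 -> R2) (n : Z) : R2 -> R2 :=
  match n with
  | Z0 => fun z => z
  | Zpos p => Nat.iter (Pos.to_nat p) f
  | Zneg p => Nat.iter (Pos.to_nat p) g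
  end.

Definition Theta (f g : R2 -> R2) (E : R2 -> Prop) : R2 -> Prop :=
  fun z => E z /\ forall n : Z, E (iterz f g n z).

Definition band (a b : R) : R2 -> Prop := fun z => a <= snd z <= b.

Inductive Rbar : Type := Fin (r : R) | PInf | NInf.

Definition Rbar_le (x y : Rbar) : Prop :=
  match x, y with
  | NInf, _ => True
  | _, PInf => True
  | Fin a, Fin b => a <= b
  | _, _ => False
  end.

(* basic neighbourhoods of x in Rbar, parametrized by e > 0 *)
Definition Rbar_ball (x : Rbar) (e : R) (y : Rbar) : Prop :=
  match x, y with
  | Fin a, Fin b => Rabs (b - a) < e
  | PInf, Fin b => 1 / e < b
  | PInf, PInf => True
  | NInf, Fin b => b < - (1 / e)
  | NInf, NInf => True
  | _, _ => False
  end.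

Definition in_closure (S : Rbar -> Prop) (x : Rbar) : Prop :=
  forall e, 0 < e -> exists y, S y /\ Rbar_ball x e y.

Definition rot_set (f : R2 -> R2) (E : R2 -> Prop) : Rbar -> Prop :=
  fun x => forall m : nat, (1 <= m)%nat ->
    in_closure (fun y => exists (n : nat) (z : R2),
        (m <= n)%nat /\ E z /\ E (Nat.iter n f z) /\
        y = Fin ((fst (Nat.iter n f z) - fst z) / INR n)) x.

Definition conv_hull (S : Rbar -> Prop) : Rbar -> Prop :=
  fun x => exists a b, S a /\ S b /\ Rbar_le a x /\ Rbar_le x b.

Definition sub_pos (S : Rbar -> Prop) : Prop :=
  forall x, S x -> exists r, x = Fin r /\ 0 < r.
Definition sub_neg (S : Rbar -> Prop) : Prop :=
  forall x, S x -> exists r, x = Fin r /\ r < 0.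

From Pilot Require Import Defs.
From Stdlib Require Import Reals Lra ZArith Lia Classical ClassicalEpsilon.
From Coquelicot Require Compactness.
Open Scope R_scope.

(* A crossing argument shows that f maps the closed half-plane below each of
   the two lines into the open one (for the lower line one uses a point of
   Theta above it), so an orbit segment that starts and ends in the band stays
   in it.  For s = 1 and s = -1 let beta be the upper limit of the normalized
   displacements s (p1(f^n z) - p1 z) / n over z in Theta; then s beta is a
   rotation number of Theta.  By compactness of a fundamental domain, every
   point whose N forward and N backward iterates lie in the band has L-step
   displacement (times s) at most L (beta + 2 eps), for suitable L and N.
   Cutting a long orbit segment in the band into blocks of length L, and
   bounding its first and last N steps by a uniform one-step bound, gives
   s x <= beta for every rotation number x of the band.  Hence the rotation
   set of the band lies between the rotation numbers of Theta obtained for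
   s = -1 and s = 1. *)

Lemma Rabs_fst_le_d2 z w : Rabs (fst z - fst w) <= Defs.d2 z w.
Proof. apply Rmax_l. Qed.

Lemma Rabs_snd_le_d2 z w : Rabs (snd z - snd w) <= Defs.d2 z w.
Proof. apply Rmax_r. Qed.

Lemma d2_lt z w r :
  Rabs (fst z - fst w) < r -> Rabs (snd z - snd w) < r -> Defs.d2 z w < r.
Proof. intros; apply Rmax_lub_lt; assumption. Qed.

Lemma nat_above r : exists N, r <= INR N.
Proof.
  destruct (archimed r) as [Hup _].
  destruct (Z_lt_le_dec (up r) 0) as [Hneg|Hnonneg].
  - exists 0%nat. apply IZR_lt in Hneg. simpl; lra.
  - exists (Z.to_nat (up r)). rewrite INR_IZR_INZ, Z2Nat.id by exact Hnonneg. lra.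
Qed.

Lemma Rabs_sign_mult s x : s = 1 \/ s = -1 -> Rabs (s * x) = Rabs x.
Proof.
  intros [-> | ->]; [now rewrite Rmult_1_l|].
  replace (-1 * x) with (- x) by ring. apply Rabs_Ropp.
Qed.

Lemma sign_mult_le_Rabs s x : s = 1 \/ s = -1 -> s * x <= Rabs x.
Proof. intros Hs. rewrite <- (Rabs_sign_mult s x Hs). apply Rle_abs. Qed.

(** * Continuity in the plane *)

Lemma continuous2_comp f h :
  continuous2 f -> continuous2 h -> continuous2 (fun z => f (h z)).
Proof.
  intros Hf Hh z eps Heps.
  destruct (Hf (h z) eps Heps) as [d1 [Hd1 H1]].
  destruct (Hh z d1 Hd1) as [d [Hd H]].
  exists d; split; auto.
Qed.

Lemma continuous2_iter f n : continuous2 f -> continuous2 (Nat.iter n f).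
Proof.
  intros Hf; induction n as [|n IH].
  - intros z eps Heps; exists eps; auto.
  - exact (continuous2_comp _ _ Hf IH).
Qed.

Definition continuous2R (phi : R2 -> R) : Prop :=
  forall z eps, 0 < eps -> exists delta, 0 < delta /\
    forall w, Defs.d2 w z < delta -> Rabs (phi w - phi z) < eps.

Lemma continuous2R_fst_disp h :
  continuous2 h -> continuous2R (fun w => fst (h w) - fst w).
Proof.
  intros Hh z eps Heps.
  destruct (Hh z (eps / 2)) as [d [Hd H]]; [lra|].
  exists (Rmin d (eps / 2)); split; [apply Rmin_pos; lra|].
  intros w Hw.
  pose proof (Rmin_l d (eps / 2)); pose proof (Rmin_r d (eps / 2)).
  pose proof (H w ltac:(lra)).
  pose proof (Rabs_fst_le_d2 (h w) (h z)); pose proof (Rabs_fst_le_d2 w z).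
  replace (fst (h w) - fst w - (fst (h z) - fst z))
    with ((fst (h w) - fst (h z)) - (fst w - fst z)) by ring.
  eapply Rle_lt_trans; [apply Rabs_triang|]. rewrite Rabs_Ropp. lra.
Qed.

Lemma continuous2R_snd h : continuous2 h -> continuous2R (fun w => snd (h w)).
Proof.
  intros Hh z eps Heps.
  destruct (Hh z eps Heps) as [d [Hd H]]. exists d; split; auto.
  intros w Hw. pose proof (H w Hw). pose proof (Rabs_snd_le_d2 (h w) (h z)). lra.
Qed.

Lemma continuous2R_scale a phi :
  continuous2R phi -> continuous2R (fun w => a * phi w).
Proof.
  intros Hphi z eps Heps.
  assert (Ha : 0 < Rabs a + 1) by (pose proof (Rabs_pos a); lra).
  destruct (Hphi z (eps / (Rabs a + 1))) as [d [Hd H]].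
  { apply Rdiv_lt_0_compat; assumption. }
  exists d; split; auto. intros w Hw.
  replace (a * phi w - a * phi z) with (a * (phi w - phi z)) by ring.
  rewrite Rabs_mult.
  assert (Hlt : Rabs (phi w - phi z) * (Rabs a + 1) < eps).
  { pose proof (H w Hw) as Hw'.
    apply (Rmult_lt_compat_r (Rabs a + 1)) in Hw'; [|exact Ha].
    replace (eps / (Rabs a + 1) * (Rabs a + 1)) with eps in Hw' by (field; lra).
    exact Hw'. }
  pose proof (Rabs_pos (phi w - phi z)). nra.
Qed.

Lemma not_band_near h lo hi p :
  continuous2 h -> ~ band lo hi (h p) ->
  exists d, 0 < d /\ forall w, Defs.d2 w p < d -> ~ band lo hi (h w).
Proof.
  intros Hh Hp. unfold band in *.
  assert (Hout : snd (h p) < lo \/ hi < snd (h p)) by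
    (destruct (Rlt_or_le (snd (h p)) lo); [auto|];
     destruct (Rlt_or_le hi (snd (h p))); [auto|tauto]).
  destruct Hout as [Hout|Hout].
  - destruct (Hh p (lo - snd (h p))) as [d [Hd H]]; [lra|].
    exists d; split; auto. intros w Hw Hb.
    pose proof (H w Hw). pose proof (Rabs_snd_le_d2 (h w) (h p)).
    pose proof (Rle_abs (snd (h w) - snd (h p))). lra.
  - destruct (Hh p (snd (h p) - hi)) as [d [Hd H]]; [lra|].
    exists d; split; auto. intros w Hw Hb.
    pose proof (H w Hw). pose proof (Rabs_snd_le_d2 (h w) (h p)).
    pose proof (Rle_abs (- (snd (h w) - snd (h p)))). rewrite Rabs_Ropp in *. lra.
Qed.

Definition lerp (a b : R2) (t : R) : R2 :=
  ((1 - t) * fst a + t * fst b, (1 - t) * snd a + t * snd b).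

Lemma continuity_snd_lerp h a b :
  continuous2 h -> continuity (fun t => snd (h (lerp a b t))).
Proof.
  intros Hh t. unfold continuity_pt, continue_in, limit1_in, limit_in; simpl.
  unfold R_dist. intros eps Heps.
  destruct (Hh (lerp a b t) eps Heps) as [d [Hd H]].
  set (M := 1 + Rabs (fst b - fst a) + Rabs (snd b - snd a)).
  pose proof (Rabs_pos (fst b - fst a)); pose proof (Rabs_pos (snd b - snd a)).
  assert (HM : 0 < M) by (unfold M; lra).
  exists (d / M); split; [apply Rdiv_lt_0_compat; assumption|].
  intros t' [_ Ht'].
  assert (Htt : Rabs (t' - t) * M < d).
  { apply (Rmult_lt_compat_r M) in Ht'; [|exact HM].
    replace (d / M * M) with d in Ht' by (field; lra). exact Ht'. }
  pose proof (Rabs_pos (t' - t)).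
  assert (Hd2 : Defs.d2 (lerp a b t') (lerp a b t) < d).
  { apply d2_lt; unfold lerp; simpl.
    - replace ((1 - t') * fst a + t' * fst b - ((1 - t) * fst a + t * fst b))
        with ((t' - t) * (fst b - fst a)) by ring.
      rewrite Rabs_mult; unfold M in Htt; nra.
    - replace ((1 - t') * snd a + t' * snd b - ((1 - t) * snd a + t * snd b))
        with ((t' - t) * (snd b - snd a)) by ring.
      rewrite Rabs_mult; unfold M in Htt; nra. }
  pose proof (H _ Hd2). pose proof (Rabs_snd_le_d2 (h (lerp a b t')) (h (lerp a b t))).
  lra.
Qed.

(** * Compactness and periodicity *)

(* The radius around (u, v) is also taken below 1 / (N + 1), so the Lebesgue
   number d of the cover bounds every index that is used by 1 / d. *)
Lemma rectangle_uniform_index (a b a' b' : R) (P : R -> R -> nat -> Prop) :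
  (forall x y N N', (N <= N')%nat -> P x y N -> P x y N') ->
  (forall u v, a <= u <= b -> a' <= v <= b' -> exists r, 0 < r /\ exists N,
     forall x y, Rabs (x - u) < r -> Rabs (y - v) < r -> P x y N) ->
  exists M, forall x y, a <= x <= b -> a' <= y <= b' -> P x y M.
Proof.
  intros Pmono Plocal.
  assert (Hex : forall u v, exists rN : R * nat, 0 < fst rN /\
     (a <= u <= b -> a' <= v <= b' -> forall x y,
        Rabs (x - u) < fst rN -> Rabs (y - v) < fst rN -> P x y (snd rN))).
  { intros u v. destruct (classic (a <= u <= b /\ a' <= v <= b')) as [[Hu Hv]|Hout].
    - destruct (Plocal u v Hu Hv) as [r [Hr [N HN]]]. exists (r, N); simpl; auto.
    - exists (1, 0%nat); simpl; split; [lra|]. intros; tauto. }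
  destruct (choice _ (fun u => choice _ (Hex u))) as [F HF].
  assert (Hpos : forall u v, 0 < Rmin (fst (F u v)) (/ (INR (snd (F u v)) + 1))).
  { intros u v. apply Rmin_glb_lt; [apply HF|].
    apply Rinv_0_lt_compat. pose proof (pos_INR (snd (F u v))); lra. }
  destruct (Compactness.compactness_value_2d a b a' b'
              (fun u v => mkposreal _ (Hpos u v))) as [d Hd].
  pose proof (cond_pos d) as Hd0.
  destruct (nat_above (/ d)) as [M HM].
  exists M. intros x y Hx Hy.
  destruct (NNPP _ (Hd x y Hx Hy)) as [u [v [Hu [Hv [Hxu [Hyv Hdle]]]]]]; simpl in *.
  pose proof (Rmin_l (fst (F u v)) (/ (INR (snd (F u v)) + 1))).
  pose proof (Rmin_r (fst (F u v)) (/ (INR (snd (F u v)) + 1))).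
  apply (Pmono x y (snd (F u v))).
  - apply INR_le.
    assert (Hn0 : 0 < INR (snd (F u v)) + 1) by (pose proof (pos_INR (snd (F u v))); lra).
    assert (INR (snd (F u v)) + 1 <= / d); [|lra].
    rewrite <- (Rinv_inv (INR (snd (F u v)) + 1)).
    apply Rinv_le_contravar; [exact Hd0 | lra].
  - apply (proj2 (HF u v)); auto; lra.
Qed.

Definition shift_x (a : R) (z : R2) : R2 := (fst z + a, snd z).

Definition commute_Tr (h : R2 -> R2) : Prop := forall z, h (Tr z) = Tr (h z).

Lemma shift_x0 z : shift_x 0 z = z.
Proof. destruct z; unfold shift_x; simpl; f_equal; ring. Qed.

Lemma shift_x_opp_l a z : shift_x (- a) (shift_x a z) = z.
Proof. destruct z; unfold shift_x; simpl; f_equal; ring. Qed.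

Lemma shift_x_opp_r a z : shift_x a (shift_x (- a) z) = z.
Proof. destruct z; unfold shift_x; simpl; f_equal; ring. Qed.

Lemma commute_Tr_shift_nat h n z :
  commute_Tr h -> h (shift_x (INR n) z) = shift_x (INR n) (h z).
Proof.
  intros Hh; revert z; induction n as [|n IH]; intros z.
  - simpl; now rewrite !shift_x0.
  - assert (HS : forall w, shift_x (INR (S n)) w = Tr (shift_x (INR n) w)).
    { intros [x y]; unfold shift_x, Tr; cbn [fst snd]; rewrite S_INR; f_equal; ring. }
    now rewrite !HS, Hh, IH.
Qed.

Lemma commute_Tr_shift_Z h k z :
  commute_Tr h -> h (shift_x (IZR k) z) = shift_x (IZR k) (h z).
Proof.
  intros Hh. destruct k as [|p|p].
  - simpl; now rewrite !shift_x0.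
  - rewrite <- positive_nat_Z, <- INR_IZR_INZ. now apply commute_Tr_shift_nat.
  - rewrite <- Pos2Z.opp_pos, opp_IZR, <- positive_nat_Z, <- INR_IZR_INZ.
    rewrite <- (shift_x_opp_l (INR (Pos.to_nat p)) (h (shift_x _ z))).
    rewrite <- commute_Tr_shift_nat by exact Hh.
    now rewrite shift_x_opp_r.
Qed.

Lemma commute_Tr_iter h n : commute_Tr h -> commute_Tr (Nat.iter n h).
Proof.
  intros Hh z; induction n as [|n IH]; simpl; [reflexivity|].
  now rewrite IH, Hh.
Qed.

Lemma commute_Tr_inv f g : is_homeo f g -> commute_Tr f -> commute_Tr g.
Proof.
  intros [_ [_ [Hfg Hgf]]] Hf z.
  rewrite <- (Hfg z) at 1. now rewrite <- Hf, Hgf.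
Qed.

Lemma shift_into_unit (z : R2) : exists k, 0 <= fst z + IZR k <= 1.
Proof.
  destruct (archimed (fst z)) as [H1 H2].
  exists (1 - up (fst z))%Z. rewrite minus_IZR. simpl. lra.
Qed.

Definition x_periodic (phi : R2 -> R) : Prop :=
  forall k z, phi (shift_x (IZR k) z) = phi z.

Lemma periodic_bounded_on_band phi lo hi :
  continuous2R phi -> x_periodic phi ->
  exists K, 0 <= K /\ forall w, band lo hi w -> Rabs (phi w) <= K.
Proof.
  intros Hphi Hper.
  destruct (rectangle_uniform_index 0 1 lo hi
              (fun x y N => Rabs (phi (x, y)) <= INR N)) as [M HM].
  - intros x y N N' HN H. apply le_INR in HN. lra.
  - intros u v _ _.
    destruct (Hphi (u, v) 1 Rlt_0_1) as [d [Hd H]].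
    exists d; split; auto.
    destruct (nat_above (Rabs (phi (u, v)) + 1)) as [N HN]. exists N.
    intros x y Hx Hy.
    pose proof (H (x, y) ltac:(apply d2_lt; simpl; assumption)).
    pose proof (Rabs_triang_inv (phi (x, y)) (phi (u, v))). lra.
  - exists (INR M). split; [apply pos_INR|]. intros w Hw.
    destruct (shift_into_unit w) as [k Hk].
    rewrite <- (Hper k w). exact (HM _ _ Hk Hw).
Qed.

(** * Invariance of lower half-planes *)

Definition pushes_down (f : R2 -> R2) (c : R) : Prop :=
  forall w, snd w <= c -> snd (f w) < c.

(* If w were below the line with f w above it, the g-image of the segment
   from f w to f w2 would cross the line at a point p, and f p, lying on
   that segment, would be above the line although f pushes it down. *)
Lemma pushes_down_of_witness f g c :
  is_homeo f g -> (forall x, snd (f (x, c)) < c) ->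
  (exists w2, c < snd w2 /\ c <= snd (f w2)) -> pushes_down f c.
Proof.
  intros [_ [Hg [Hfg Hgf]]] Hline [w2 [Hw2 Hfw2]] w Hw.
  destruct (Rle_lt_or_eq_dec _ _ Hw) as [Hlt|Heq];
    [|destruct w as [x y]; simpl in Heq; subst; apply Hline].
  apply Rnot_le_lt. intros Hfw.
  set (a := f w) in *. set (b := f w2) in *.
  assert (Hcont : continuity (fun t => snd (g (lerp a b t)) - c)).
  { apply (continuity_minus (fun t => snd (g (lerp a b t))) (fun _ => c)).
    - now apply continuity_snd_lerp.
    - now apply continuity_const. }
  assert (Ha : lerp a b 0 = a) by (unfold lerp; destruct a; simpl; f_equal; ring).
  assert (Hb : lerp a b 1 = b) by (unfold lerp; destruct b; simpl; f_equal; ring).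
  destruct (IVT _ 0 1 Hcont Rlt_0_1) as [t [Ht Hcross]].
  { rewrite Ha; unfold a; rewrite Hgf; lra. }
  { rewrite Hb; unfold b; rewrite Hgf; lra. }
  destruct (g (lerp a b t)) as [px py] eqn:Hp; simpl in Hcross.
  replace py with c in Hp by lra.
  pose proof (Hline px) as Hpush. rewrite <- Hp, Hfg in Hpush.
  unfold lerp in Hpush; simpl in Hpush.
  assert (0 <= (1 - t) * (snd a - c)) by (apply Rmult_le_pos; lra).
  assert (0 <= t * (snd b - c)) by (apply Rmult_le_pos; lra).
  lra.
Qed.

Lemma pushes_down_Theta_lo f g lo hi :
  is_homeo f g -> (forall x, snd (f (x, lo)) < lo) ->
  (exists z, Theta f g (band lo hi) z) -> pushes_down f lo.
Proof.
  intros Hh Hline [z [Hz Horb]].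
  apply (pushes_down_of_witness f g lo Hh Hline).
  pose proof (Horb 1%Z) as Hfz. simpl in Hfz. unfold band in *.
  exists z. split; [|lra].
  destruct (Rle_lt_or_eq_dec _ _ (proj1 Hz)) as [|Heq]; [assumption|].
  destruct z as [x y]; simpl in Heq; subst. pose proof (Hline x). lra.
Qed.

(* The witness for the upper line is g q for a point q far above the band:
   g q cannot lie below the band, where f pushes down, nor in the band,
   where the height of f is bounded. *)
Lemma pushes_down_hi f g lo hi :
  is_homeo f g -> commute_Tr f -> (forall x, snd (f (x, hi)) < hi) ->
  pushes_down f lo -> pushes_down f hi.
Proof.
  intros Hh Hc Hline Plo.
  apply (pushes_down_of_witness f g hi Hh Hline).
  destruct (periodic_bounded_on_band (fun w => snd (f w)) lo hi) as [K [HK0 HK]].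
  { apply continuous2R_snd, Hh. }
  { intros k z. now rewrite commute_Tr_shift_Z. }
  pose proof Hh as [_ [_ [Hfg _]]].
  set (q := (0, Rabs lo + Rabs hi + K + 1)).
  pose proof (Rle_abs lo); pose proof (Rle_abs hi); pose proof (Rabs_pos lo); pose proof (Rabs_pos hi).
  exists (g q). rewrite Hfg. unfold q; simpl. split; [|lra].
  apply Rnot_le_lt. intros Hle.
  destruct (Rle_or_lt (snd (g q)) lo) as [Hlo|Hlo].
  - pose proof (Plo _ Hlo) as Hq. rewrite Hfg in Hq. unfold q in Hq; simpl in Hq. lra.
  - specialize (HK (g q) (conj (Rlt_le _ _ Hlo) Hle)).
    rewrite Hfg in HK. unfold q in HK; simpl in HK.
    pose proof (Rle_abs (Rabs lo + Rabs hi + K + 1)). lra.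
Qed.

Lemma orbit_segment_in_band f lo hi n z :
  pushes_down f lo -> pushes_down f hi ->
  band lo hi z -> band lo hi (Nat.iter n f z) ->
  forall k, (k <= n)%nat -> band lo hi (Nat.iter k f z).
Proof.
  intros Plo Phi Hz Hn k Hk. unfold band in *.
  assert (Hup : forall j, snd (Nat.iter j f z) <= hi).
  { induction j; simpl; [lra|]. left; apply Phi; assumption. }
  split; [|apply Hup].
  apply Rnot_lt_le. intros Hlt.
  assert (Hdown : forall j, snd (Nat.iter (j + k) f z) < lo).
  { induction j; simpl; [assumption|]. apply Plo; lra. }
  specialize (Hdown (n - k)%nat). replace (n - k + k)%nat with n in Hdown by lia. lra.
Qed.

(** * Orbits in a band *)

Definition orbit_in (f g : R2 -> R2) (E : R2 -> Prop) (z : R2) : Prop :=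
  forall n : nat, E (Nat.iter n f z) /\ E (Nat.iter n g z).

Definition orbit_in_upto (f g : R2 -> R2) (E : R2 -> Prop) (N : nat) (z : R2) : Prop :=
  forall n : nat, (n <= N)%nat -> E (Nat.iter n f z) /\ E (Nat.iter n g z).

Lemma Theta_iff_orbit_in f g E z : Theta f g E z <-> orbit_in f g E z.
Proof.
  split.
  - intros [H0 H] [|n]; [simpl; auto|].
    pose proof (H (Z.pos (Pos.of_succ_nat n))) as Hpos.
    pose proof (H (Z.neg (Pos.of_succ_nat n))) as Hneg.
    simpl in Hpos, Hneg. rewrite SuccNat2Pos.id_succ in Hpos, Hneg. auto.
  - intros H. split; [apply (H 0%nat)|].
    intros [|p|p]; simpl; [apply (H 0%nat)|apply H|apply H].
Qed.

Lemma orbit_in_iter f g E z L :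
  is_homeo f g -> orbit_in f g E z -> orbit_in f g E (Nat.iter L f z).
Proof.
  intros [_ [_ [Hfg Hgf]]] Hz. induction L as [|L IH]; simpl; [assumption|].
  intros n. split.
  - rewrite <- Nat.iter_succ_r. apply IH.
  - destruct n as [|n]; [apply (IH 1%nat)|].
    rewrite Nat.iter_succ_r, Hgf. apply IH.
Qed.

Lemma iter_inv_iter f g z i m :
  is_homeo f g -> Nat.iter i g (Nat.iter (i + m) f z) = Nat.iter m f z.
Proof.
  intros [_ [_ [_ Hgf]]]. induction i as [|i IH]; [reflexivity|].
  rewrite Nat.iter_succ_r. simpl (S i + m)%nat. now rewrite Nat.iter_succ, Hgf.
Qed.

Definition disp (f : R2 -> R2) (n : nat) (z : R2) : R := fst (Nat.iter n f z) - fst z.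

Lemma disp_add f a b z : disp f (a + b) z = disp f a (Nat.iter b f z) + disp f b z.
Proof. unfold disp; rewrite Nat.iter_add; ring. Qed.

Lemma disp_bound f E C n z :
  (forall w, E w -> Rabs (disp f 1 w) <= C) ->
  (forall k, (k < n)%nat -> E (Nat.iter k f z)) -> Rabs (disp f n z) <= INR n * C.
Proof.
  intros HC; revert z; induction n as [|n IH]; intros z Hz.
  - unfold disp; simpl. rewrite Rminus_diag, Rabs_R0; lra.
  - replace (S n) with (1 + n)%nat by lia. rewrite disp_add, plus_INR.
    eapply Rle_trans; [apply Rabs_triang|].
    pose proof (HC _ (Hz n ltac:(lia))).
    pose proof (IH z ltac:(intros; apply Hz; lia)). simpl (INR 1). lra.
Qed.

Lemma disp_ratio_bound f E C n z :
  (1 <= n)%nat -> (forall w, E w -> Rabs (disp f 1 w) <= C) ->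
  (forall k, (k < n)%nat -> E (Nat.iter k f z)) -> Rabs (disp f n z / INR n) <= C.
Proof.
  intros Hn HC Hz.
  assert (Hn0 : 0 < INR n) by (apply lt_0_INR; lia).
  pose proof (disp_bound f E C n z HC Hz) as Hd.
  unfold Rdiv. rewrite Rabs_mult, Rabs_inv, (Rabs_pos_eq (INR n)) by lra.
  apply (Rmult_le_reg_r (INR n)); [exact Hn0|].
  rewrite Rmult_assoc, Rinv_l by lra. lra.
Qed.

Definition Theta_ratios (f g : R2 -> R2) (E : R2 -> Prop) (s : R) (m : nat) (t : R) : Prop :=
  exists n z, (m <= n)%nat /\ (1 <= n)%nat /\ orbit_in f g E z /\
    t = s * (disp f n z / INR n).

Lemma tail_limsup (S : nat -> R -> Prop) (C : R) :
  (forall m m' t, (m <= m')%nat -> S m' t -> S m t) ->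
  (forall m, exists t, S m t) ->
  (forall m t, S m t -> Rabs t <= C) ->
  exists beta,
    (forall eps, 0 < eps -> exists m, forall t, S m t -> t < beta + eps) /\
    (forall m eps, 0 < eps -> exists t, S m t /\ Rabs (t - beta) < eps).
Proof.
  intros Smono Sne Sbd.
  set (U := fun u => exists m, forall t, S m t -> t <= u).
  assert (U_lb : forall u, U u -> - C <= u).
  { intros u [m Hm]. destruct (Sne m) as [t Ht].
    pose proof (Hm t Ht). pose proof (Sbd m t Ht).
    pose proof (Rle_abs (- t)). rewrite Rabs_Ropp in *. lra. }
  assert (U_C : U C).
  { exists 0%nat. intros t Ht. pose proof (Sbd 0%nat t Ht). pose proof (Rle_abs t). lra. }
  assert (Vbound : bound (fun v => U (- v))).
  { exists C. intros v Hv. pose proof (U_lb _ Hv). lra. }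
  assert (Vne : exists v, U (- v)) by (exists (- C); now rewrite Ropp_involutive).
  destruct (completeness _ Vbound Vne) as [lam [Hub Hlub]].
  assert (beta_lb : forall u, U u -> - lam <= u).
  { intros u Hu. assert (- u <= lam); [|lra].
    apply Hub. now rewrite Ropp_involutive. }
  assert (beta_glb : forall b, (forall u, U u -> b <= u) -> b <= - lam).
  { intros b Hb. assert (lam <= - b); [|lra].
    apply Hlub. intros v Hv. pose proof (Hb _ Hv). lra. }
  assert (upper : forall eps, 0 < eps -> exists m, forall t, S m t -> t < - lam + eps).
  { intros eps Heps. apply NNPP; intros Hnone.
    assert (- lam + eps <= - lam); [|lra].
    apply beta_glb. intros u [m Hm]. apply Rnot_lt_le; intros Hlt.
    apply Hnone. exists m. intros t Ht. pose proof (Hm t Ht). lra. }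
  exists (- lam); split; [exact upper|].
  intros m eps Heps. destruct (upper eps Heps) as [m1 Hm1].
  assert (Hex : exists t, S (Nat.max m m1) t /\ - lam - eps < t).
  { apply NNPP; intros Hnone.
    assert (- lam <= - lam - eps); [|lra].
    apply beta_lb. exists (Nat.max m m1). intros t Ht.
    apply Rnot_lt_le; intros Hlt. apply Hnone. exists t; auto. }
  destruct Hex as [t [Ht Hlt]]. exists t. split.
  - apply (Smono m (Nat.max m m1)); [lia|exact Ht].
  - pose proof (Hm1 t (Smono m1 (Nat.max m m1) t ltac:(lia) Ht)). apply Rabs_def1; lra.
Qed.

(** * Rotation numbers in a band *)

Section Band.

Variables (f g : R2 -> R2) (lo hi : R).
Hypothesis f_homeo : is_homeo f g.
Hypothesis f_commute : commute_Tr f.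

Lemma orbit_in_upto_shift N w k :
  orbit_in_upto f g (band lo hi) N w -> orbit_in_upto f g (band lo hi) N (shift_x (IZR k) w).
Proof.
  intros Hw n Hn. destruct (Hw n Hn) as [Hf Hg].
  rewrite (commute_Tr_shift_Z (Nat.iter n f)), (commute_Tr_shift_Z (Nat.iter n g)).
  - unfold band, shift_x in *; simpl; auto.
  - apply commute_Tr_iter. eapply commute_Tr_inv; eassumption.
  - apply commute_Tr_iter; assumption.
Qed.

(* The points whose orbit stays in the band form a closed set; the points of
   the fundamental domain [0,1] x [lo,hi] near none of them leave the band
   after boundedly many iterations. *)
Lemma orbit_in_upto_bound (phi : R2 -> R) c eta :
  continuous2R phi -> x_periodic phi -> 0 < eta ->
  (forall w, orbit_in f g (band lo hi) w -> phi w < c) ->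
  exists N, forall w, orbit_in_upto f g (band lo hi) N w -> phi w < c + eta.
Proof.
  intros Hphi Hper Heta HTheta.
  pose proof f_homeo as [Hf [Hg _]].
  destruct (rectangle_uniform_index 0 1 lo hi (fun x y N =>
              phi (x, y) < c + eta \/ ~ orbit_in_upto f g (band lo hi) N (x, y)))
    as [M HM].
  - intros x y N N' HN [Hlt|Hout]; [now left|right].
    intros Hup. apply Hout. intros n Hn. apply Hup. lia.
  - intros u v _ _.
    destruct (classic (orbit_in f g (band lo hi) (u, v))) as [Hin|Hout].
    + destruct (Hphi (u, v) eta Heta) as [d [Hd H]].
      exists d; split; auto. exists 0%nat. intros x y Hx Hy. left.
      pose proof (H (x, y) ltac:(apply d2_lt; simpl; assumption)).
      pose proof (HTheta _ Hin). pose proof (Rle_abs (phi (x, y) - phi (u, v))). lra.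
    + apply not_all_ex_not in Hout as [n Hn]. apply not_and_or in Hn.
      assert (Hleave : exists h, continuous2 h /\ ~ band lo hi (h (u, v)) /\
                (forall w, orbit_in_upto f g (band lo hi) n w -> band lo hi (h w))).
      { destruct Hn as [Hn|Hn]; [exists (Nat.iter n f)|exists (Nat.iter n g)];
          (split; [now apply continuous2_iter|split; [exact Hn|]]);
          intros w Hw; apply (Hw n (le_n n)). }
      destruct Hleave as [h [Hh [Hhout Hhin]]].
      destruct (not_band_near h lo hi (u, v) Hh Hhout) as [d [Hd H]].
      exists d; split; auto. exists n. intros x y Hx Hy. right. intros Hup.
      apply (H (x, y)); [apply d2_lt; simpl; assumption|]. now apply Hhin.
  - exists M. intros w Hw.
    destruct (shift_into_unit w) as [k Hk].
    assert (Hy : band lo hi w) by apply (Hw 0%nat (Nat.le_0_l _)).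
    destruct (HM _ _ Hk Hy) as [Hlt|Hout].
    + rewrite <- (Hper k w). exact Hlt.
    + exfalso. apply Hout. now apply orbit_in_upto_shift.
Qed.

Lemma disp_shift L k z : disp f L (shift_x (IZR k) z) = disp f L z.
Proof.
  unfold disp. rewrite (commute_Tr_shift_Z (Nat.iter L f)) by now apply commute_Tr_iter.
  unfold shift_x; simpl; ring.
Qed.

Hypothesis down_lo : pushes_down f lo.
Hypothesis down_hi : pushes_down f hi.
Variable C : R.
Hypothesis C_nonneg : 0 <= C.
Hypothesis disp1_bound : forall w, band lo hi w -> Rabs (disp f 1 w) <= C.
Variable s : R.
Hypothesis s_sign : s = 1 \/ s = -1.

Lemma block_sum_bound L N gam :
  (1 <= L)%nat ->
  (forall w, orbit_in_upto f g (band lo hi) N w -> s * disp f L w <= INR L * gam) ->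
  forall k w, (forall i, (i <= k)%nat -> orbit_in_upto f g (band lo hi) N (Nat.iter i f w)) ->
  s * disp f k w <= INR k * gam + INR L * (C + Rabs gam).
Proof.
  intros HL Hblock k.
  induction k as [k IH] using lt_wf_ind; intros w Hw.
  destruct (Nat.lt_ge_cases k L) as [Hk|Hk].
  - assert (Hd : Rabs (disp f k w) <= INR k * C).
    { apply (disp_bound f (band lo hi)); [exact disp1_bound|].
      intros i Hi. apply (Hw i ltac:(lia) 0%nat (Nat.le_0_l _)). }
    pose proof (sign_mult_le_Rabs s (disp f k w) s_sign).
    assert (Hkl : INR k <= INR L) by (apply le_INR; lia).
    pose proof (pos_INR k). pose proof (Rabs_pos gam).
    pose proof (Rle_abs (- gam)). rewrite Rabs_Ropp in *.
    nra.
  - replace k with ((k - L) + L)%nat by lia. rewrite disp_add, plus_INR.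
    assert (Hrest : s * disp f (k - L) (Nat.iter L f w)
                    <= INR (k - L) * gam + INR L * (C + Rabs gam)).
    { apply IH; [lia|]. intros i Hi. rewrite <- Nat.iter_add. apply Hw. lia. }
    pose proof (Hblock w (Hw 0%nat ltac:(lia))). lra.
Qed.

(* The first and last N steps are controlled by the one-step bound, and the
   middle part by blocks, since its points have N iterates in the band on
   both sides. *)
Lemma segment_estimate L N gam :
  (1 <= L)%nat ->
  (forall w, orbit_in_upto f g (band lo hi) N w -> s * disp f L w <= INR L * gam) ->
  exists K, forall n z, (2 * N <= n)%nat ->
    (forall i, (i <= n)%nat -> band lo hi (Nat.iter i f z)) ->
    s * disp f n z <= INR n * gam + K.
Proof.
  intros HL Hblock.
  exists (2 * INR N * C + INR L * (C + Rabs gam) + 2 * INR N * Rabs gam).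
  intros n z Hn Hz.
  set (k := (n - 2 * N)%nat).
  replace n with (N + (k + N))%nat by (unfold k; lia).
  rewrite !disp_add.
  assert (Hlast : Rabs (disp f N (Nat.iter (k + N) f z)) <= INR N * C).
  { apply (disp_bound f (band lo hi)); [exact disp1_bound|].
    intros i Hi. rewrite <- Nat.iter_add. apply Hz. unfold k; lia. }
  assert (Hfirst : Rabs (disp f N z) <= INR N * C).
  { apply (disp_bound f (band lo hi)); [exact disp1_bound|].
    intros i Hi. apply Hz. lia. }
  assert (Hmid : s * disp f k (Nat.iter N f z) <= INR k * gam + INR L * (C + Rabs gam)).
  { apply (block_sum_bound L N gam HL Hblock).
    intros i Hi j Hj. rewrite <- (Nat.iter_add i N). split.
    - rewrite <- Nat.iter_add. apply Hz. unfold k in *; lia.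
    - replace (i + N)%nat with (j + (i + N - j))%nat by lia.
      rewrite iter_inv_iter by exact f_homeo. apply Hz. unfold k in *; lia. }
  pose proof (sign_mult_le_Rabs s (disp f N (Nat.iter (k + N) f z)) s_sign).
  pose proof (sign_mult_le_Rabs s (disp f N z) s_sign).
  pose proof (pos_INR N). pose proof (Rle_abs (- gam)). rewrite Rabs_Ropp in *.
  rewrite !plus_INR. nra.
Qed.

Lemma Theta_ratios_limsup :
  (exists z, orbit_in f g (band lo hi) z) ->
  exists beta,
    (forall eps, 0 < eps -> exists m, forall t,
       Theta_ratios f g (band lo hi) s m t -> t < beta + eps) /\
    (forall m eps, 0 < eps -> exists t,
       Theta_ratios f g (band lo hi) s m t /\ Rabs (t - beta) < eps).
Proof.
  intros [z0 Hz0]. apply (tail_limsup _ C).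
  - intros m m' t Hm [n [z [Hn [Hn1 [Hz Ht]]]]]. exists n, z. split; [lia|auto].
  - intros m. eexists. exists (S m), z0. split; [lia|]. split; [lia|]. auto.
  - intros m t [n [z [_ [Hn [Hz ->]]]]]. rewrite Rabs_sign_mult by exact s_sign.
    apply (disp_ratio_bound f (band lo hi)); auto. intros k _. apply Hz.
Qed.

Lemma rot_set_Theta_limsup beta :
  (forall m eps, 0 < eps -> exists t,
     Theta_ratios f g (band lo hi) s m t /\ Rabs (t - beta) < eps) ->
  rot_set f (Theta f g (band lo hi)) (Fin (s * beta)).
Proof.
  intros Happrox m Hm e He.
  destruct (Happrox m e He) as [t [[n [z [Hmn [Hn [Hz ->]]]]] Ht]].
  eexists. split.
  - exists n, z. split; [lia|]. split; [|split]; [| |reflexivity];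
      apply Theta_iff_orbit_in; [assumption|]. now apply orbit_in_iter.
  - simpl. fold (disp f n z).
    replace (disp f n z / INR n - s * beta) with (s * (s * (disp f n z / INR n) - beta))
      by (destruct s_sign as [-> | ->]; ring).
    now rewrite Rabs_sign_mult.
Qed.

Lemma uniform_block_bound beta :
  (forall eps, 0 < eps -> exists m, forall t,
     Theta_ratios f g (band lo hi) s m t -> t < beta + eps) ->
  forall eps, 0 < eps -> exists L N, (1 <= L)%nat /\
    forall w, orbit_in_upto f g (band lo hi) N w ->
      s * disp f L w <= INR L * (beta + 2 * eps).
Proof.
  intros Hbeta eps Heps.
  destruct (Hbeta eps Heps) as [m Hm].
  set (L := S m).
  assert (HL : 0 < INR L) by (apply lt_0_INR; unfold L; lia).
  set (phi := fun w => (s / INR L) * disp f L w).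
  assert (Hratio : forall w, phi w = s * (disp f L w / INR L))
    by (intros w; unfold phi; field; lra).
  destruct (orbit_in_upto_bound phi (beta + eps) eps) as [N HN].
  - apply continuous2R_scale, (continuous2R_fst_disp (Nat.iter L f)).
    apply continuous2_iter, f_homeo.
  - intros k z. unfold phi. now rewrite disp_shift.
  - exact Heps.
  - intros w Hw. rewrite Hratio. apply Hm. exists L, w. unfold L. split; [lia|]. split; [lia|]. auto.
  - exists L, N. split; [unfold L; lia|]. intros w Hw.
    pose proof (HN w Hw) as Hlt. rewrite Hratio in Hlt.
    apply (Rmult_lt_compat_l (INR L)) in Hlt; [|exact HL].
    replace (INR L * (s * (disp f L w / INR L))) with (s * disp f L w) in Hlt
      by (field; lra).
    lra.
Qed.

Lemma band_ratio_eventually_le beta :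
  (forall eps, 0 < eps -> exists m, forall t,
     Theta_ratios f g (band lo hi) s m t -> t < beta + eps) ->
  forall eps, 0 < eps -> exists n0, forall n z, (n0 <= n)%nat ->
    band lo hi z -> band lo hi (Nat.iter n f z) ->
    s * (disp f n z / INR n) <= beta + 3 * eps.
Proof.
  intros Hbeta eps Heps.
  destruct (uniform_block_bound beta Hbeta eps Heps) as [L [N [HL Hblock]]].
  destruct (segment_estimate L N (beta + 2 * eps) HL Hblock) as [K HK].
  destruct (nat_above (Rabs K / eps)) as [M HM].
  exists (Nat.max (2 * N) (S M)). intros n z Hn Hz Hzn.
  pose proof (HK n z ltac:(lia)
    (orbit_segment_in_band f lo hi n z down_lo down_hi Hz Hzn)) as Hest.
  assert (Hn0 : 0 < INR n) by (apply lt_0_INR; lia).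
  assert (HMn : INR M < INR n) by (apply lt_INR; lia).
  assert (HKn : K < eps * INR n).
  { pose proof (Rle_abs K).
    assert (Rabs K < eps * INR n); [|lra].
    apply (Rmult_lt_reg_r (/ eps)); [now apply Rinv_0_lt_compat|].
    replace (eps * INR n * / eps) with (INR n) by (field; lra). lra. }
  apply (Rmult_le_reg_r (INR n)); [exact Hn0|].
  replace (s * (disp f n z / INR n) * INR n) with (s * disp f n z) by (field; lra).
  lra.
Qed.

Lemma rot_set_band_le beta x :
  (forall eps, 0 < eps -> exists m, forall t,
     Theta_ratios f g (band lo hi) s m t -> t < beta + eps) ->
  rot_set f (band lo hi) (Fin x) -> s * x <= beta.
Proof.
  intros Hbeta Hx. apply Rle_plus_epsilon. intros e He.
  assert (Heps : 0 < e / 4) by lra.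
  destruct (band_ratio_eventually_le beta Hbeta (e / 4) Heps) as [n0 Hn0].
  destruct (Hx (S n0) ltac:(lia) (e / 4) Heps)
    as [y [[n [z [Hn [Hz [Hzn ->]]]]] Hball]].
  simpl in Hball. fold (disp f n z) in Hball.
  pose proof (Hn0 n z ltac:(lia) Hz Hzn).
  pose proof (sign_mult_le_Rabs s (x - disp f n z / INR n) s_sign) as Hs.
  rewrite <- Rabs_Ropp, Ropp_minus_distr in Hs. lra.
Qed.

Lemma rot_set_band_finite x : rot_set f (band lo hi) x -> exists r, x = Fin r.
Proof.
  intros Hx.
  assert (He : 0 < 1 / (C + 1)) by (apply Rdiv_lt_0_compat; lra).
  destruct (Hx 1%nat (le_n 1) _ He) as [y [[n [z [Hn [Hz [Hzn ->]]]]] Hball]].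
  fold (disp f n z) in Hball.
  assert (Hbound : Rabs (disp f n z / INR n) <= C).
  { apply (disp_ratio_bound f (band lo hi)); auto.
    intros k Hk. apply (orbit_segment_in_band f lo hi n z); auto; lia. }
  pose proof (Rle_abs (disp f n z / INR n)).
  pose proof (Rle_abs (- (disp f n z / INR n))). rewrite Rabs_Ropp in *.
  destruct x as [r| |]; [now exists r| |]; simpl in Hball;
    replace (1 / (1 / (C + 1))) with (C + 1) in Hball by (field; lra); lra.
Qed.

End Band.

Lemma rot_set_band_in_conv_hull f g lo hi :
  is_homeo f g -> commute_Tr f ->
  (forall x, snd (f (x, lo)) < lo) -> (forall x, snd (f (x, hi)) < hi) ->
  (exists z, Theta f g (band lo hi) z) ->
  forall x, rot_set f (band lo hi) x -> conv_hull (rot_set f (Theta f g (band lo hi))) x.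
Proof.
  intros Hh Hc Hlo Hhi HTheta.
  pose proof (pushes_down_Theta_lo f g lo hi Hh Hlo HTheta) as Plo.
  pose proof (pushes_down_hi f g lo hi Hh Hc Hhi Plo) as Phi.
  destruct (periodic_bounded_on_band (disp f 1) lo hi) as [C [HC0 HC]].
  { apply (continuous2R_fst_disp (Nat.iter 1 f)), continuous2_iter, Hh. }
  { intros k z. now apply disp_shift. }
  assert (Horb : exists z, orbit_in f g (band lo hi) z)
    by (destruct HTheta as [z Hz]; exists z; now apply Theta_iff_orbit_in).
  destruct (Theta_ratios_limsup f g lo hi C HC 1 (or_introl eq_refl) Horb)
    as [b1 [Hup1 Happ1]].
  destruct (Theta_ratios_limsup f g lo hi C HC (-1) (or_intror eq_refl) Horb)
    as [b2 [Hup2 Happ2]].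
  intros x Hx.
  destruct (rot_set_band_finite f lo hi Plo Phi C HC0 HC x Hx) as [r ->].
  exists (Fin (-1 * b2)), (Fin (1 * b1)). split; [|split; [|split]].
  - exact (rot_set_Theta_limsup f g lo hi Hh (-1) (or_intror eq_refl) b2 Happ2).
  - exact (rot_set_Theta_limsup f g lo hi Hh 1 (or_introl eq_refl) b1 Happ1).
  - pose proof (rot_set_band_le f g lo hi Hh Hc Plo Phi C HC0 HC (-1)
                  (or_intror eq_refl) b2 r Hup2 Hx). simpl; lra.
  - pose proof (rot_set_band_le f g lo hi Hh Hc Plo Phi C HC0 HC 1
                  (or_introl eq_refl) b1 r Hup1 Hx). simpl; lra.
Qed.

Lemma conv_hull_sub_pos S : sub_pos S -> sub_pos (conv_hull S).
Proof.
  intros HS x [a [b [Ha [Hb [Hax Hxb]]]]].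
  destruct (HS a Ha) as [ra [-> Hra]]. destruct (HS b Hb) as [rb [-> Hrb]].
  destruct x as [r| |]; simpl in *; try contradiction. exists r; split; [reflexivity|lra].
Qed.

Lemma conv_hull_sub_neg S : sub_neg S -> sub_neg (conv_hull S).
Proof.
  intros HS x [a [b [Ha [Hb [Hax Hxb]]]]].
  destruct (HS a Ha) as [ra [-> Hra]]. destruct (HS b Hb) as [rb [-> Hrb]].
  destruct x as [r| |]; simpl in *; try contradiction. exists r; split; [reflexivity|lra].
Qed.

Theorem proposition6p7 (f g : R2 -> R2) (c0 c1 c2 : R) :
  is_homeo f g -> isotopic_to_id f -> (forall z, f (Tr z) = Tr (f z)) ->
  (* (H1) *)
  c1 < c0 -> c2 < c1 ->
  (forall x, snd (f (x, c0)) < c0) ->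
  (forall x, snd (f (x, c1)) < c1) ->
  (forall x, snd (f (x, c2)) < c2) ->
  (* (H2) *)
  (forall n : nat, (1 <= n)%nat -> exists x, snd (Nat.iter n f (x, c0)) = c2) ->
  (* (H3) *)
  (exists z, Theta f g (band c1 c0) z) ->
  (exists z, Theta f g (band c2 c1) z) ->
  sub_pos (rot_set f (Theta f g (band c1 c0))) ->
  sub_neg (rot_set f (Theta f g (band c2 c1))) ->
  (forall x, rot_set f (band c1 c0) x ->
             conv_hull (rot_set f (Theta f g (band c1 c0))) x) /\
  (forall x, rot_set f (band c2 c1) x ->
             conv_hull (rot_set f (Theta f g (band c2 c1))) x) /\
  sub_pos (rot_set f (band c1 c0)) /\
  sub_neg (rot_set f (band c2 c1)).
Proof.
  intros Hh _ Hc _ _ L0 L1 L2 _ T0 T1 Hpos Hneg.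
  pose proof (rot_set_band_in_conv_hull f g c1 c0 Hh Hc L1 L0 T0) as Hull0.
  pose proof (rot_set_band_in_conv_hull f g c2 c1 Hh Hc L2 L1 T1) as Hull1.
  split; [exact Hull0|]. split; [exact Hull1|]. split.
  - intros x Hx. exact (conv_hull_sub_pos _ Hpos x (Hull0 x Hx)).
  - intros x Hx. exact (conv_hull_sub_neg _ Hneg x (Hull1 x Hx)).
Qed.
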